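(* Let $(\mathcal W,\rhd)$ be a $\lambda$A-frame and $\eta$ a hereditary type environment. If $\gamma\vdash A\preceq B$ is derivable and $\eta(X)_p\subseteq\eta(Y)_p$ for every $p\in\mathcal W$ and every pair $X\preceq Y$ in $\gamma$, then $\mathcal I[A]^\eta_p\subseteq\mathcal I[B]^\eta_p$ for every $p\in\mathcal W$.
   Context: Type expressions: fix a countably infinite set of type variables $X,Y,Z,\dots$. Pseudo type expressions are generated by $A::=X\mid A\to A\mid \bullet A\mid \mu X.A$ ($\mu$ binds $X$; $\alpha$-convertible expressions are identified; $\to$ associates to the right; $\bullet$ binds tighter than $\to$, which binds tighter than $\mu$). $A[B/X]$ denotes capture-avoiding substitution. $\top$ abbreviates $\mu X.\bullet X$, and $\bullet^n A$ denotes $A$ prefixed by $n$ copies of $\bullet$. The tail $t(A)$ is defined by $t(X)=X$, $t(A\to B)=t(B)$, $t(\bullet A)=\bullet t(A)$, $t(\mu X.A)=\mu X.t(A)$; it always has the form $\bullet^{m_0}\mu X_1.\bullet^{m_1}\mu X_2.\cdots\mu X_n.\bullet^{m_n}Y$. $A$ is a $\top$-variant iff $Y=X_i$ for some $1\le i\le n$ with $X_i\notin\{X_{i+1},\dots,X_n\}$ and $m_i+\dots+m_n\ge 1$. $A$ is proper in $X$ iff: a variable $Y$ is proper in $X$ iff $Y\neq X$; $\bullet A$ is always proper in $X$; $A\to B$ is proper in $X$ iff both $A,B$ are proper in $X$ or $B$ is a $\top$-variant; for $Y\ne X$, $\mu Y.A$ is proper in $X$ iff $A$ is proper in $X$ or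 $\mu Y.A$ is a $\top$-variant. Type expressions are the least set of pseudo type expressions containing all type variables, closed under $\to$ and $\bullet$, and containing $\mu X.A$ whenever it contains $A$ and $A$ is proper in $X$. Equality: $\cong$ is the least relation on type expressions such that: $A\cong A$; $A\cong B$ implies $B\cong A$; $A\cong B$ and $B\cong C$ imply $A\cong C$; $A\cong B$ implies $\bullet A\cong\bullet B$; $A\cong C$ and $B\cong D$ imply $A\to B\cong C\to D$; $A\to\top\cong\top$; $\mu X.A\cong A[\mu X.A/X]$; and if $A\cong C[A/X]$ with $C$ proper in $X$, then $A\cong\mu X.C$. $\simeq$ is the least relation satisfying the same closure conditions and additionally $\bullet(A\to B)\simeq\bullet A\to\bullet B$. Subtyping: a subtyping assumption $\gamma$ is a finite set of pairs $X\preceq Y$ of type variables in which each type variable occurs at most once; $FTV(\gamma)$ is the set of variables occurring in it. Judgments $\gamma\vdash A\preceq B$ are derived by the rules: $\gamma\cup\{X\preceq Y\}\vdash X\preceq Y$; $\gamma\vdash A\preceq\top$; from $A\simeq B$ infer $\gamma\vdash A\preceq B$; from $\gamma_1\vdash A\preceq B$ and $\gamma_2\vdash B\preceq C$ infer $\gamma_1\cup\gamma_2\vdash A\preceq C$; from $\gamma\vdash A\preceq B$ infer $\gamma\vdash\bullet A\preceq\bullet B$; from $\gamma_1\vdash A'\preceq A$ and $\gamma_2\vdash B\preceq B'$ infer $\gamma_1\cup\gamma_2\vdash A\to B\preceq A'\to B'$; from $\gamma\cup\{X\preceq Y\}\vdash A\preceq B$ infer $\gamma\vdash\mu X.A\preceq\mu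 Y.B$, provided $X\notin FTV(\gamma)\cup FTV(B)$, $Y\notin FTV(\gamma)\cup FTV(A)$, $A$ is proper in $X$ and $B$ is proper in $Y$; and $\gamma\vdash A\preceq\bullet A$. All sets $\gamma\cup\{X\preceq Y\}$, $\gamma_1\cup\gamma_2$ must be well-formed subtyping assumptions. $A\preceq B$ means $\{\}\vdash A\preceq B$ is derivable. Semantics: a syntactical $\lambda$-algebra $(\mathcal V,\cdot,[\![-]\!])$ consists of a nonempty set $\mathcal V$, a map $\cdot:\mathcal V\times\mathcal V\to\mathcal V$, and values $[\![M]\!]_\rho\in\mathcal V$ for untyped $\lambda$-terms $M$ and maps $\rho$ from individual variables to $\mathcal V$, such that $[\![x]\!]_\rho=\rho(x)$, $[\![MN]\!]_\rho=[\![M]\!]_\rho\cdot[\![N]\!]_\rho$, $[\![\lambda x.M]\!]_\rho\cdot v=[\![M]\!]_{\rho[v/x]}$, $[\![M]\!]_\rho$ depends only on $\rho$ restricted to free variables of $M$, and $M=_\beta N$ implies $[\![M]\!]_\rho=[\![N]\!]_\rho$; fix one. A well-founded frame is a pair $(\mathcal W,\rhd)$ with $\mathcal W$ nonempty and $\rhd$ a binary relation on $\mathcal W$ admitting no infinite chain $p_0\rhd p_1\rhd p_2\rhd\cdots$; $\trianglerighteq$ denotes the reflexive-transitive closure of $\rhd$. $\rhd$ is locally linear if whenever $p\rhd q$ there is $r$ with $p\trianglerighteq r\rhd q$ such that $r\rhd s$ implies $q\trianglerighteq s$ for all $s$. A $\lambda$A-frame is a well-founded frame whose $\rhd$ is locally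 linear. A type environment $\eta$ assigns a set $\eta(X)_p\subseteq\mathcal V$ to each type variable $X$ and world $p$; it is hereditary if $p\rhd q$ implies $\eta(X)_p\subseteq\eta(X)_q$. For hereditary $\eta$, $\mathcal I[A]^\eta_p\subseteq\mathcal V$ is defined (by well-founded induction on $p$ and the syntactic rank of $A$) by: $\mathcal I[A]^\eta_p=\mathcal V$ if $A$ is a $\top$-variant; otherwise $\mathcal I[X]^\eta_p=\eta(X)_p$; $\mathcal I[\bullet A]^\eta_p=\{u\mid u\in\mathcal I[A]^\eta_q\text{ for all }q\text{ with }p\rhd q\}$; $\mathcal I[A\to B]^\eta_p=\{u\mid \text{for all }q\text{ with }p\trianglerighteq q\text{ and all }v\in\mathcal I[A]^\eta_q,\ u\cdot v\in\mathcal I[B]^\eta_q\}$; $\mathcal I[\mu X.A]^\eta_p=\mathcal I[A[\mu X.A/X]]^\eta_p$. *)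

From Stdlib Require Import List Arith Relations.
Import ListNotations.

(* Type expressions, locally nameless: free type variables are named   *)
(* by nat (a countably infinite set), mu-bound variables are de Bruijn *)
(* indices, so alpha-convertible expressions are identified.           *)

Inductive ty : Type :=
| TFV  : nat -> ty
| TBV  : nat -> ty
| TArr : ty -> ty -> ty
| TLat : ty -> ty
| TMu  : ty -> ty.          (* mu X. A  (body uses TBV 0 for X) *)

Fixpoint open_rec (k : nat) (U : ty) (A : ty) : ty :=
  match A with
  | TFV x => TFV x
  | TBV i => if Nat.eqb i k then U else TBV i
  | TArr A1 A2 => TArr (open_rec k U A1) (open_rec k U A2)
  | TLat A1 => TLat (open_rec k U A1)
  | TMu A1 => TMu (open_rec (S k) U A1)
  end.

Definition open (A U : ty) : ty := open_rec 0 U A.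

Fixpoint close_rec (k : nat) (x : nat) (A : ty) : ty :=
  match A with
  | TFV y => if Nat.eqb y x then TBV k else TFV y
  | TBV i => TBV i
  | TArr A1 A2 => TArr (close_rec k x A1) (close_rec k x A2)
  | TLat A1 => TLat (close_rec k x A1)
  | TMu A1 => TMu (close_rec (S k) x A1)
  end.

(* abstract the named variable x:  mu x. A  is  TMu (close x A) *)
Definition close (x : nat) (A : ty) : ty := close_rec 0 x A.

(* capture-avoiding substitution A[U/x] (capture is impossible in the
   locally nameless representation) *)
Fixpoint subst (x : nat) (U : ty) (A : ty) : ty :=
  match A with
  | TFV y => if Nat.eqb y x then U else TFV y
  | TBV i => TBV i
  | TArr A1 A2 => TArr (subst x U A1) (subst x U A2)
  | TLat A1 => TLat (subst x U A1)
  | TMu A1 => TMu (subst x U A1)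
  end.

Fixpoint occurs_free (x : nat) (A : ty) : Prop :=
  match A with
  | TFV y => y = x
  | TBV _ => False
  | TArr A1 A2 => occurs_free x A1 \/ occurs_free x A2
  | TLat A1 => occurs_free x A1
  | TMu A1 => occurs_free x A1
  end.

Definition top : ty := TMu (TLat (TBV 0)).

(* The tail t(A) is the chain of bullets and mu's obtained by following
   the right-hand sides of arrows.  [tail_info A] computes, bottom-up,
   what is needed to decide top-variance:
     TIFree        : the tail ends in a free variable;
     TIPend k b    : the tail ends in a variable bound k binders further
                     out, b = whether a bullet has been passed so far;
     TIRes b       : the tail ends in a variable bound by a mu of the
                     tail; b = whether m_i + ... + m_n >= 1, i.e. a
                     bullet lies between that binder and the variable. *)
Inductive tinfo : Type :=
| TIFree : tinfo
| TIPend : nat -> bool -> tinfo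
| TIRes  : bool -> tinfo.

Fixpoint tail_info (A : ty) : tinfo :=
  match A with
  | TFV _ => TIFree
  | TBV k => TIPend k false
  | TArr _ B => tail_info B
  | TLat A1 =>
      match tail_info A1 with
      | TIPend k _ => TIPend k true
      | t => t
      end
  | TMu A1 =>
      match tail_info A1 with
      | TIPend 0 b => TIRes b
      | TIPend (S k) b => TIPend k b
      | t => t
      end
  end.

Definition top_variant (A : ty) : bool :=
  match tail_info A with
  | TIRes true => true
  | _ => false
  end.

(* bound variables (TBV) are never equal to the free variable x *)
Fixpoint proper (x : nat) (A : ty) : bool :=
  match A with
  | TFV y => negb (Nat.eqb y x)
  | TBV _ => true
  | TArr A1 A2 => (proper x A1 && proper x A2) || top_variant A2
  | TLat _ => true
  | TMu A1 => proper x A1 || top_variant A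
  end.

Inductive wf_ty : ty -> Prop :=
| wf_var : forall x, wf_ty (TFV x)
| wf_arr : forall A B, wf_ty A -> wf_ty B -> wf_ty (TArr A B)
| wf_lat : forall A, wf_ty A -> wf_ty (TLat A)
| wf_mu  : forall x A, wf_ty A -> proper x A = true -> wf_ty (TMu (close x A)).

(* Equality: teq_gen false is  ≅ ,  teq_gen true is  ≃ .              *)
Inductive teq_gen (d : bool) : ty -> ty -> Prop :=
| eq_refl_ : forall A, wf_ty A -> teq_gen d A A
| eq_sym_ : forall A B, teq_gen d A B -> teq_gen d B A
| eq_trans_ : forall A B C, teq_gen d A B -> teq_gen d B C -> teq_gen d A C
| eq_lat : forall A B, teq_gen d A B -> teq_gen d (TLat A) (TLat B)
| eq_arr : forall A B C D, teq_gen d A C -> teq_gen d B D ->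
    teq_gen d (TArr A B) (TArr C D)
| eq_arr_top : forall A, wf_ty A -> teq_gen d (TArr A top) top
| eq_fold : forall A, wf_ty (TMu A) -> teq_gen d (TMu A) (open A (TMu A))
| eq_uniq : forall A C x, wf_ty A -> wf_ty C -> proper x C = true ->
    teq_gen d A (subst x A C) -> teq_gen d A (TMu (close x C))
| eq_distr : forall A B, d = true -> wf_ty A -> wf_ty B ->
    teq_gen d (TLat (TArr A B)) (TArr (TLat A) (TLat B)).

Definition teq := teq_gen false.
Definition tsim := teq_gen true.

(* A subtyping assumption is a finite set of pairs (X,Y) meaning X ≼ Y,
   represented by a list (only membership matters). *)
Definition assum := list (nat * nat).

(* each type variable occurs at most once in the set of pairs *)
Definition assum_wf (g : assum) : Prop :=
  (forall a, In a g -> fst a <> snd a) /\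
  (forall a b, In a g -> In b g ->
     (fst a = fst b \/ fst a = snd b \/ snd a = fst b \/ snd a = snd b) ->
     a = b).

Definition ftv (g : assum) (x : nat) : Prop :=
  exists a, In a g /\ (fst a = x \/ snd a = x).

Definition is_union (g g1 g2 : assum) : Prop :=
  forall a, In a g <-> In a g1 \/ In a g2.

Inductive sub : assum -> ty -> ty -> Prop :=
| sub_ax : forall g X Y, assum_wf g -> In (X, Y) g -> sub g (TFV X) (TFV Y)
| sub_top : forall g A, assum_wf g -> wf_ty A -> sub g A top
| sub_sim : forall g A B, assum_wf g -> tsim A B -> sub g A B
| sub_trans : forall g g1 g2 A B C, sub g1 A B -> sub g2 B C ->
    assum_wf g -> is_union g g1 g2 -> sub g A C
| sub_lat : forall g A B, sub g A B -> sub g (TLat A) (TLat B)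
| sub_arr : forall g g1 g2 A A' B B', sub g1 A' A -> sub g2 B B' ->
    assum_wf g -> is_union g g1 g2 -> sub g (TArr A B) (TArr A' B')
| sub_mu : forall g g' X Y A B, sub g' A B -> assum_wf g' ->
    (forall a, In a g' <-> In a g \/ a = (X, Y)) ->
    ~ ftv g X -> ~ occurs_free X B ->
    ~ ftv g Y -> ~ occurs_free Y A ->
    proper X A = true -> proper Y B = true ->
    sub g (TMu (close X A)) (TMu (close Y B))
| sub_later : forall g A, assum_wf g -> wf_ty A -> sub g A (TLat A).

Inductive lterm : Type :=
| LVar : nat -> lterm
| LApp : lterm -> lterm -> lterm
| LLam : lterm -> lterm.

Fixpoint lren (r : nat -> nat) (M : lterm) : lterm :=
  match M with
  | LVar n => LVar (r n)
  | LApp M1 M2 => LApp (lren r M1) (lren r M2)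
  | LLam M1 => LLam (lren (fun n => match n with 0 => 0 | S m => S (r m) end) M1)
  end.

Definition lup (s : nat -> lterm) : nat -> lterm :=
  fun n => match n with 0 => LVar 0 | S m => lren S (s m) end.

Fixpoint lsubst (s : nat -> lterm) (M : lterm) : lterm :=
  match M with
  | LVar n => s n
  | LApp M1 M2 => LApp (lsubst s M1) (lsubst s M2)
  | LLam M1 => LLam (lsubst (lup s) M1)
  end.

Definition scons {T : Type} (x : T) (f : nat -> T) : nat -> T :=
  fun n => match n with 0 => x | S m => f m end.

Inductive beta_eq : lterm -> lterm -> Prop :=
| be_refl : forall M, beta_eq M M
| be_sym : forall M N, beta_eq M N -> beta_eq N M
| be_trans : forall M N P, beta_eq M N -> beta_eq N P -> beta_eq M P
| be_app : forall M M' N N', beta_eq M M' -> beta_eq N N' ->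
    beta_eq (LApp M N) (LApp M' N')
| be_lam : forall M M', beta_eq M M' -> beta_eq (LLam M) (LLam M')
| be_beta : forall M N, beta_eq (LApp (LLam M) N) (lsubst (scons N LVar) M).

Fixpoint lfree (x : nat) (M : lterm) : Prop :=
  match M with
  | LVar n => n = x
  | LApp M1 M2 => lfree x M1 \/ lfree x M2
  | LLam M1 => lfree (S x) M1
  end.

Definition syn_lambda_algebra (V : Type) (app : V -> V -> V)
  (den : lterm -> (nat -> V) -> V) : Prop :=
  inhabited V /\
  (forall x rho, den (LVar x) rho = rho x) /\
  (forall M N rho, den (LApp M N) rho = app (den M rho) (den N rho)) /\
  (forall M rho v, app (den (LLam M) rho) v = den M (scons v rho)) /\
  (forall M rho rho', (forall x, lfree x M -> rho x = rho' x) ->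
       den M rho = den M rho') /\
  (forall M N rho, beta_eq M N -> den M rho = den N rho).

Definition well_founded_frame (W : Type) (R : W -> W -> Prop) : Prop :=
  inhabited W /\ ~ (exists f : nat -> W, forall n, R (f n) (f (S n))).

Definition locally_linear (W : Type) (R : W -> W -> Prop) : Prop :=
  forall p q, R p q ->
    exists r, clos_refl_trans W R p r /\ R r q /\
      (forall s, R r s -> clos_refl_trans W R q s).

Definition lambdaA_frame (W : Type) (R : W -> W -> Prop) : Prop :=
  well_founded_frame W R /\ locally_linear W R.

Definition hereditary {V W : Type} (R : W -> W -> Prop)
  (eta : nat -> W -> V -> Prop) : Prop :=
  forall X p q, R p q -> forall v, eta X p v -> eta X q v.

(* [is_interp app R eta I] : I satisfies the defining clauses of
   I[A]^eta_p on all type expressions A and worlds p.  These clauses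
   determine I uniquely (by well-founded induction on p and the rank of A,
   as in the paper), so I is the paper's interpretation. *)
Definition is_interp {V W : Type} (app : V -> V -> V) (R : W -> W -> Prop)
  (eta : nat -> W -> V -> Prop) (I : ty -> W -> V -> Prop) : Prop :=
  forall A p, wf_ty A -> forall u,
    I A p u <->
    (if top_variant A then True else
     match A with
     | TFV X => eta X p u
     | TBV _ => False
     | TLat A1 => forall q, R p q -> I A1 q u
     | TArr A1 A2 => forall q, clos_refl_trans W R p q ->
                       forall v, I A1 q v -> I A2 q (app u v)
     | TMu A1 => I (open A1 (TMu A1)) p u
     end).

From Stdlib Require Import List Relations Arith Lia Bool Classical.
From Stdlib Require Import Setoid FunctionalExtensionality ClassicalEpsilon.
From Stdlib Require Import Wellfounded.Transitive_Closure Wellfounded.Inclusion.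

(* Soundness is proved by induction on the subtyping derivation, for all
   hereditary environments at once.  Since the interpretation is determined by
   well-founded recursion on worlds and on the rank, the meaning of a type only
   depends on its free variables at later worlds, and if [A] is proper in [X]
   then the meaning of [A] at [p] depends on [X] only at worlds strictly after
   [p] (contractivity).  Contractivity gives the unique-fixed-point rule of
   equality by induction on worlds, and the mu-rule of subtyping by
   interpreting [X] as [I(mu X.A) ∩ I(mu Y.B)] and [Y] as [I(mu Y.B)] in the
   premise.  Local linearity is exactly what validates
   [•(A → B) ≃ •A → •B]. *)

Fixpoint proper_idx (j : nat) (A : ty) : bool :=
  match A with
  | TFV _ => true
  | TBV i => negb (Nat.eqb i j)
  | TArr A1 A2 => (proper_idx j A1 && proper_idx j A2) || top_variant A2
  | TLat _ => true
  | TMu A1 => proper_idx (S j) A1 || top_variant (TMu A1)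
  end.

(* Locally nameless counterpart of [wf_ty]: at most [k] dangling indices,
   and every mu-body proper in its own bound variable. *)
Fixpoint wf_at (k : nat) (A : ty) : Prop :=
  match A with
  | TFV _ => True
  | TBV i => i < k
  | TArr A1 A2 => wf_at k A1 /\ wf_at k A2
  | TLat A1 => wf_at k A1
  | TMu A1 => wf_at (S k) A1 /\ proper_idx 0 A1 = true
  end.

(* The rank measure of the paper: guarded positions (under a bullet) and
   top-variants have rank 0, so unfolding a proper mu decreases it. *)
Fixpoint rank (A : ty) : nat :=
  if top_variant A then 0 else
  match A with
  | TArr A1 A2 => S (max (rank A1) (rank A2))
  | TMu A1 => S (rank A1)
  | _ => 0
  end.

Fixpoint size_ty (A : ty) : nat :=
  match A with
  | TFV _ | TBV _ => 1
  | TArr A1 A2 => S (size_ty A1 + size_ty A2)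
  | TLat A1 | TMu A1 => S (size_ty A1)
  end.

Fixpoint max_fv (A : ty) : nat :=
  match A with
  | TFV x => x
  | TBV _ => 0
  | TArr A1 A2 => max (max_fv A1) (max_fv A2)
  | TLat A1 | TMu A1 => max_fv A1
  end.

Definition fresh (A : ty) : nat := S (max_fv A).

Ltac split_proper H :=
  apply orb_true_iff in H; destruct H as [H|H];
  [try (apply andb_true_iff in H; destruct H) |].

(** * Tails and top-variants *)

Lemma top_variant_arr A B : top_variant (TArr A B) = top_variant B.
Proof. reflexivity. Qed.

Lemma top_variant_lat A : top_variant (TLat A) = top_variant A.
Proof. unfold top_variant; simpl. destruct (tail_info A); auto. Qed.

Lemma tail_info_open : forall A k U,
  (forall b, tail_info A = TIRes b -> tail_info (open_rec k U A) = TIRes b) /\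
  (forall j b, tail_info A = TIPend j b -> j <> k ->
     tail_info (open_rec k U A) = TIPend j b) /\
  (forall b, tail_info A = TIPend k b -> tail_info U = TIRes true ->
     tail_info (open_rec k U A) = TIRes true).
Proof.
  induction A; intros k U; simpl.
  - repeat split; intros; discriminate.
  - repeat split; intros.
    + discriminate.
    + injection H as <- <-. apply Nat.eqb_neq in H0. rewrite H0. reflexivity.
    + injection H as <-. rewrite Nat.eqb_refl. auto.
  - apply IHA2.
  - destruct (IHA k U) as [H1 [H2 H3]].
    repeat split; intros; destruct (tail_info A) eqn:E; try discriminate.
    + rewrite (H1 _ eq_refl). auto.
    + injection H as <- <-. rewrite (H2 _ _ eq_refl H0). auto.
    + injection H as <-. rewrite (H3 _ eq_refl H0). auto.
  - destruct (IHA (S k) U) as [H1 [H2 H3]].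
    repeat split; intros; destruct (tail_info A) eqn:E; try discriminate.
    + destruct n; [|discriminate]. injection H as <-.
      rewrite (H2 _ _ eq_refl); auto.
    + injection H as <-. rewrite (H1 _ eq_refl). auto.
    + destruct n; [discriminate|]. injection H as <- <-.
      rewrite (H2 _ _ eq_refl); [auto | lia].
    + destruct n; [discriminate|]. injection H as <- <-.
      rewrite (H3 _ eq_refl H0). auto.
Qed.

Lemma top_variant_open A k U :
  top_variant A = true -> top_variant (open_rec k U A) = true.
Proof.
  unfold top_variant. destruct (tail_info A) eqn:E; try discriminate.
  destruct b; try discriminate. intros _.
  rewrite (proj1 (tail_info_open A k U) _ E). auto.
Qed.

Lemma top_variant_unfold A :
  top_variant (TMu A) = true -> top_variant (open A (TMu A)) = true.
Proof.
  unfold top_variant, open. intro H.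
  destruct (tail_info_open A 0 (TMu A)) as [H1 [_ H3]].
  simpl in H. destruct (tail_info A) eqn:T; try discriminate.
  - destruct n; try discriminate. destruct b; try discriminate.
    rewrite (H3 true eq_refl); simpl; rewrite ?T; auto.
  - destruct b; try discriminate. rewrite (H1 _ eq_refl). auto.
Qed.

Lemma tail_info_subst : forall A x U, tail_info A <> TIFree ->
  tail_info (subst x U A) = tail_info A.
Proof.
  induction A; intros x U H; simpl in *; auto.
  - congruence.
  - destruct (tail_info A) eqn:E; try congruence; rewrite IHA; try congruence; rewrite E; auto.
  - destruct (tail_info A) eqn:E; try congruence; rewrite IHA; try congruence; rewrite E; auto.
Qed.

Lemma top_variant_subst A x U :
  top_variant A = true -> top_variant (subst x U A) = true.
Proof.
  unfold top_variant. intro H. rewrite tail_info_subst; auto.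
  intro E; rewrite E in H; discriminate.
Qed.

Lemma tail_info_close : forall A k x,
  (forall b, tail_info A = TIRes b -> tail_info (close_rec k x A) = TIRes b) /\
  (forall j b, tail_info A = TIPend j b -> tail_info (close_rec k x A) = TIPend j b).
Proof.
  induction A; intros k x; simpl.
  - split; intros; discriminate.
  - split; intros; auto.
  - apply IHA2.
  - destruct (IHA k x) as [H1 H2].
    split; intros; destruct (tail_info A) eqn:E; try discriminate.
    + rewrite (H1 _ eq_refl). auto.
    + injection H as <- <-. rewrite (H2 _ _ eq_refl). auto.
  - destruct (IHA (S k) x) as [H1 H2].
    split; intros; destruct (tail_info A) eqn:E; try discriminate.
    + rewrite (H2 _ _ eq_refl). auto.
    + rewrite (H1 _ eq_refl). auto.
    + rewrite (H2 _ _ eq_refl). auto.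
Qed.

Lemma top_variant_close A k x :
  top_variant A = true -> top_variant (close_rec k x A) = true.
Proof.
  unfold top_variant. destruct (tail_info A) eqn:E; try discriminate.
  destruct b; try discriminate. intros _.
  rewrite (proj1 (tail_info_close A k x) _ E). auto.
Qed.

Lemma wf_at_weaken : forall A k m, wf_at k A -> k <= m -> wf_at m A.
Proof.
  induction A; intros k m H Hle; simpl in *; intuition eauto; try lia.
  eapply IHA; eauto; lia.
Qed.

Lemma proper_idx_wf_at : forall A k j, wf_at k A -> k <= j -> proper_idx j A = true.
Proof.
  induction A; intros k j H Hle; simpl in *; auto.
  - apply negb_true_iff, Nat.eqb_neq. lia.
  - destruct H. rewrite (IHA1 k j), (IHA2 k j); auto.
  - destruct H. rewrite (IHA (S k) (S j)); auto. lia.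
Qed.

Lemma open_rec_wf_at : forall U j k W, wf_at j U -> j <= k -> open_rec k W U = U.
Proof.
  induction U; intros j k W H Hle; simpl in *; auto.
  - destruct (Nat.eqb n k) eqn:E; auto. apply Nat.eqb_eq in E; lia.
  - destruct H; f_equal; eauto.
  - f_equal; eauto.
  - destruct H; f_equal; eapply IHU; eauto; lia.
Qed.

Lemma proper_idx_open : forall A j k U, proper_idx j A = true -> wf_at 0 U -> j <> k ->
  proper_idx j (open_rec k U A) = true.
Proof.
  induction A; intros j k U H HU Hjk; simpl in *; auto.
  - destruct (Nat.eqb n k); auto. eapply proper_idx_wf_at; eauto; lia.
  - split_proper H.
    + rewrite IHA1, IHA2; auto.
    + rewrite (top_variant_open _ k U H). apply orb_true_r.
  - split_proper H.
    + rewrite IHA; auto.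
    + apply orb_true_iff; right. apply (top_variant_open (TMu A) k U H).
Qed.

Lemma wf_at_open : forall A k U, wf_at (S k) A -> wf_at 0 U -> wf_at k (open_rec k U A).
Proof.
  induction A; intros k U H HU; simpl in *; auto.
  - destruct (Nat.eqb n k) eqn:E.
    + eapply wf_at_weaken; eauto; lia.
    + simpl. apply Nat.eqb_neq in E. lia.
  - intuition.
  - destruct H; split; auto. apply proper_idx_open; auto.
Qed.

Lemma wf_at_unfold A : wf_at 0 (TMu A) -> wf_at 0 (open A (TMu A)).
Proof. intros [H1 H2]. apply wf_at_open; simpl; auto. Qed.

Lemma proper_idx_subst : forall A j x U, proper_idx j A = true -> wf_at 0 U ->
  proper_idx j (subst x U A) = true.
Proof.
  induction A; intros j x U H HU; simpl in *; auto.
  - destruct (Nat.eqb n x); auto. eapply proper_idx_wf_at; eauto; lia.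
  - split_proper H.
    + rewrite IHA1, IHA2; auto.
    + rewrite (top_variant_subst _ x U H). apply orb_true_r.
  - split_proper H.
    + rewrite IHA; auto.
    + apply orb_true_iff; right. apply (top_variant_subst (TMu A) x U H).
Qed.

Lemma wf_at_subst : forall A k x U, wf_at k A -> wf_at 0 U -> wf_at k (subst x U A).
Proof.
  induction A; intros k x U H HU; simpl in *; auto.
  - destruct (Nat.eqb n x); simpl; auto. eapply wf_at_weaken; eauto; lia.
  - intuition.
  - destruct H; split; auto. apply proper_idx_subst; auto.
Qed.

Lemma subst_open_rec : forall A k x U V, wf_at 0 U ->
  subst x U (open_rec k V A) = open_rec k (subst x U V) (subst x U A).
Proof.
  induction A; intros k x U V HU; simpl; f_equal; auto.
  - destruct (Nat.eqb n x); auto. rewrite (open_rec_wf_at U 0); auto; lia.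
  - destruct (Nat.eqb n k); auto.
Qed.

Lemma open_close_rec : forall A k x U, wf_at k A ->
  open_rec k U (close_rec k x A) = subst x U A.
Proof.
  induction A; intros k x U H; simpl in *; auto.
  - destruct (Nat.eqb n x); simpl; auto. rewrite Nat.eqb_refl; auto.
  - destruct (Nat.eqb n k) eqn:E; auto. apply Nat.eqb_eq in E; lia.
  - destruct H; f_equal; auto.
  - f_equal; auto.
  - destruct H; f_equal; auto.
Qed.

Lemma close_open_rec : forall A k x, ~ occurs_free x A ->
  close_rec k x (open_rec k (TFV x) A) = A.
Proof.
  induction A; intros k x Hx; simpl in *; f_equal; auto.
  - destruct (Nat.eqb n x) eqn:E; auto. apply Nat.eqb_eq in E; congruence.
  - destruct (Nat.eqb n k) eqn:E; simpl; auto. rewrite Nat.eqb_refl.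
    apply Nat.eqb_eq in E; congruence.
Qed.

Lemma proper_idx_close : forall A j k x, proper_idx j A = true -> j <> k ->
  proper_idx j (close_rec k x A) = true.
Proof.
  induction A; intros j k x H Hjk; simpl in *; auto.
  - destruct (Nat.eqb n x); simpl; auto. apply negb_true_iff, Nat.eqb_neq; lia.
  - split_proper H.
    + rewrite IHA1, IHA2; auto.
    + rewrite (top_variant_close _ k x H). apply orb_true_r.
  - split_proper H.
    + rewrite IHA; auto.
    + apply orb_true_iff; right. apply (top_variant_close (TMu A) k x H).
Qed.

Lemma wf_at_close : forall A k x, wf_at k A -> wf_at (S k) (close_rec k x A).
Proof.
  induction A; intros k x H; simpl in *; auto.
  - destruct (Nat.eqb n x); simpl; auto.
  - intuition.
  - destruct H; split; auto. apply proper_idx_close; auto.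
Qed.

Lemma proper_idx_close_proper : forall A k x, wf_at k A -> proper x A = true ->
  proper_idx k (close_rec k x A) = true.
Proof.
  induction A; intros k x H Hp; simpl in *; auto.
  - destruct (Nat.eqb n x); simpl in *; auto. discriminate.
  - apply negb_true_iff, Nat.eqb_neq; lia.
  - destruct H. split_proper Hp.
    + rewrite IHA1, IHA2; auto.
    + rewrite (top_variant_close _ k x Hp). apply orb_true_r.
  - destruct H. split_proper Hp.
    + rewrite IHA; auto.
    + apply orb_true_iff; right. apply (top_variant_close (TMu A) k x Hp).
Qed.

Lemma proper_open_fv : forall A k x, proper_idx k A = true -> ~ occurs_free x A ->
  proper x (open_rec k (TFV x) A) = true.
Proof.
  induction A; intros k x H Hx; simpl in *; auto.
  - apply negb_true_iff, Nat.eqb_neq; auto.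
  - destruct (Nat.eqb n k); simpl in *; auto. discriminate.
  - split_proper H.
    + rewrite IHA1, IHA2; auto.
    + rewrite (top_variant_open _ k (TFV x) H). apply orb_true_r.
  - split_proper H.
    + rewrite IHA; auto.
    + apply orb_true_iff; right. apply (top_variant_open (TMu A) k (TFV x) H).
Qed.

Lemma proper_open : forall A k X U, proper X A = true -> proper X U = true ->
  proper X (open_rec k U A) = true.
Proof.
  induction A; intros k X U H HU; simpl in *; auto.
  - destruct (Nat.eqb n k); auto.
  - split_proper H.
    + rewrite IHA1, IHA2; auto.
    + rewrite (top_variant_open _ k U H). apply orb_true_r.
  - split_proper H.
    + rewrite IHA; auto.
    + apply orb_true_iff; right. apply (top_variant_open (TMu A) k U H).
Qed.

Lemma proper_not_free : forall A X, ~ occurs_free X A -> proper X A = true.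
Proof.
  induction A; intros X H; simpl in *.
  - apply negb_true_iff, Nat.eqb_neq; auto.
  - auto.
  - rewrite IHA1, IHA2; auto.
  - auto.
  - rewrite IHA; auto.
Qed.

Lemma occurs_free_open : forall A k U Z, occurs_free Z (open_rec k U A) ->
  occurs_free Z A \/ occurs_free Z U.
Proof.
  induction A; intros k U Z H; simpl in *; auto.
  - destruct (Nat.eqb n k); simpl in *; auto.
  - destruct H as [H|H]; [destruct (IHA1 _ _ _ H)|destruct (IHA2 _ _ _ H)]; auto.
  - eapply IHA; eauto.
  - eapply IHA; eauto.
Qed.

Lemma fresh_not_free A : ~ occurs_free (fresh A) A.
Proof.
  enough (H : forall x, occurs_free x A -> x <= max_fv A).
  { intro F. apply H in F. unfold fresh in F. lia. }
  induction A; intros x H; simpl in *; try lia; try tauto.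
  - destruct H as [H|H]; [specialize (IHA1 _ H)|specialize (IHA2 _ H)]; lia.
  - apply IHA; auto.
  - apply IHA; auto.
Qed.

Lemma size_open_fv : forall A k x, size_ty (open_rec k (TFV x) A) = size_ty A.
Proof. induction A; intros; simpl; auto. destruct (Nat.eqb n k); auto. Qed.

Lemma wf_ty_wf_at A : wf_ty A -> wf_at 0 A.
Proof.
  induction 1; simpl; auto.
  split; [apply wf_at_close | apply proper_idx_close_proper]; auto.
Qed.

Lemma wf_at_wf_ty A : wf_at 0 A -> wf_ty A.
Proof.
  remember (size_ty A) as n. assert (Hn : size_ty A <= n) by lia. clear Heqn.
  revert A Hn. induction n; intros A Hn H; [destruct A; simpl in Hn; lia|].
  destruct A; simpl in *.
  - constructor.
  - lia.
  - destruct H. constructor; apply IHn; auto; lia.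
  - constructor; apply IHn; auto; lia.
  - destruct H as [H1 H2].
    pose proof (fresh_not_free A) as Hx.
    rewrite <- (close_open_rec A 0 (fresh A) Hx).
    constructor.
    + apply IHn. rewrite size_open_fv; lia. apply wf_at_open; simpl; auto.
    + apply proper_open_fv; auto.
Qed.

Lemma rank_open : forall A k U, proper_idx k A = true ->
  rank (open_rec k U A) <= rank A.
Proof.
  induction A; intros k U H.
  - simpl; lia.
  - simpl in *. destruct (Nat.eqb n k); simpl in *; [discriminate|lia].
  - simpl open_rec. simpl rank. rewrite !top_variant_arr.
    destruct (top_variant (open_rec k U A2)) eqn:E1; [lia|].
    simpl in H. split_proper H.
    + destruct (top_variant A2) eqn:E2.
      * rewrite (top_variant_open _ k U E2) in E1; discriminate.
      * specialize (IHA1 k U H). specialize (IHA2 k U H0). lia.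
    + rewrite (top_variant_open _ k U H) in E1; discriminate.
  - simpl. destruct (top_variant _); lia.
  - simpl open_rec. cbn [rank].
    destruct (top_variant (TMu (open_rec (S k) U A))) eqn:E1; [lia|].
    assert (E2 : top_variant (TMu A) = false).
    { destruct (top_variant (TMu A)) eqn:E2; auto.
      pose proof (top_variant_open _ k U E2). simpl in *. congruence. }
    rewrite E2. simpl in H. rewrite E2, orb_false_r in H.
    specialize (IHA (S k) U H). lia.
Qed.

Lemma rank_unfold A : wf_at 0 (TMu A) -> top_variant (TMu A) = false ->
  rank (open A (TMu A)) < rank (TMu A).
Proof.
  intros [_ H2] H. pose proof (rank_open A 0 (TMu A) H2).
  unfold open. cbn [rank]. rewrite H. lia.
Qed.

Lemma rank_arr A B : top_variant (TArr A B) = false ->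
  rank A < rank (TArr A B) /\ rank B < rank (TArr A B).
Proof. intro H. cbn [rank]. rewrite H. lia. Qed.

Lemma wf_at_top : wf_at 0 top.
Proof. simpl. auto. Qed.

Lemma teq_wf_at d A B : teq_gen d A B -> wf_at 0 A /\ wf_at 0 B.
Proof.
  induction 1; simpl; try tauto.
  - split; apply wf_ty_wf_at; auto.
  - pose proof (wf_ty_wf_at _ H). auto using wf_at_top.
  - pose proof (wf_ty_wf_at _ H). split; auto. apply wf_at_unfold; auto.
  - split. tauto. apply (wf_ty_wf_at (TMu (close x C))). constructor; auto.
  - pose proof (wf_ty_wf_at _ H0). pose proof (wf_ty_wf_at _ H1). auto.
Qed.

Lemma sub_wf_at g A B : sub g A B -> wf_at 0 A /\ wf_at 0 B.
Proof.
  induction 1; simpl; intuition (auto using wf_ty_wf_at, wf_at_top).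
  all: first [exact (proj1 (teq_wf_at _ _ _ H0)) | exact (proj2 (teq_wf_at _ _ _ H0))
             | apply wf_at_close; auto | apply proper_idx_close_proper; auto].
Qed.

(** * Well-founded frames *)

Section Frames.
Variables (W : Type) (R : W -> W -> Prop).

(* Dependent choice: a world with no accessibility proof has a successor
   with none, so iterating a choice function gives an infinite chain. *)
Lemma no_infinite_chain_wf :
  ~ (exists f : nat -> W, forall n, R (f n) (f (S n))) ->
  well_founded (fun q p => R p q).
Proof.
  intros H p. apply NNPP; intro Hp.
  set (P := fun x => ~ Acc (fun q p => R p q) x).
  assert (step : forall x, P x -> exists y, R x y /\ P y).
  { intros x Hx. apply NNPP; intro Hno. apply Hx. constructor. intros y Hy.
    apply NNPP; intro Hy'. apply Hno. exists y; auto. }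
  assert (next : forall s : {x | P x}, {t : {x | P x} | R (proj1_sig s) (proj1_sig t)}).
  { intro s.
    destruct (constructive_indefinite_description _ (step _ (proj2_sig s))) as [y [Hy1 Hy2]].
    exists (exist _ y Hy2). exact Hy1. }
  apply H. exists (fun n => proj1_sig (Nat.iter n (fun s => proj1_sig (next s)) (exist P p Hp))).
  intro n. simpl. apply (proj2_sig (next _)).
Qed.

Lemma frame_future_wf : well_founded_frame W R -> well_founded (fun q p => clos_trans W R p q).
Proof.
  intros [_ H]. apply no_infinite_chain_wf in H.
  eapply wf_incl; [|exact (wf_clos_trans _ _ H)].
  intros q p Hpq. apply clos_trans_transp_permute. exact Hpq.
Qed.

Lemma clos_rt_eq_or_t p q : clos_refl_trans W R p q -> p = q \/ clos_trans W R p q.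
Proof.
  induction 1 as [| |x y z _ [<-|H1] _ [<-|H2]]; auto using t_step.
  right. apply t_trans with y; auto.
Qed.

Lemma clos_t_rt_t p q s :
  clos_trans W R p q -> clos_refl_trans W R q s -> clos_trans W R p s.
Proof.
  intros H1 H2. destruct (clos_rt_eq_or_t _ _ H2) as [<-|H]; auto.
  apply t_trans with q; auto.
Qed.

Lemma clos_t_first p s :
  clos_trans W R p s -> exists q, R p q /\ clos_refl_trans W R q s.
Proof.
  intro H. apply clos_trans_t1n in H. destruct H as [s Hps|q s Hpq Hqs].
  - exists s; split; auto. apply rt_refl.
  - exists q; split; auto. apply clos_t_clos_rt, clos_t1n_trans; auto.
Qed.

Lemma clos_t_last p s :
  clos_trans W R p s -> exists q, clos_refl_trans W R p q /\ R q s.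
Proof.
  intro H. apply clos_trans_tn1 in H. destruct H as [Hps|q s Hqs Hpq].
  - exists p; split; auto. apply rt_refl.
  - exists q; split; auto. apply clos_t_clos_rt, clos_tn1_trans; auto.
Qed.
End Frames.

(** * Interpretations *)

Section Interpretation.
Variables (V : Type) (app : V -> V -> V) (W : Type) (R : W -> W -> Prop).
Hypothesis future_wf : well_founded (fun q p => clos_trans W R p q).

Lemma clos_t_irrefl p : ~ clos_trans W R p p.
Proof.
  induction p as [p IH] using (well_founded_induction future_wf).
  intro H. exact (IH p H H).
Qed.

Lemma world_rank_ind (P : W -> ty -> Prop) :
  (forall p A, (forall q B, clos_trans W R p q -> P q B) ->
     (forall B, rank B < rank A -> P p B) -> P p A) ->
  forall p A, P p A.
Proof.
  intros H p. induction p as [p IHp] using (well_founded_induction future_wf).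
  intro A. remember (rank A) as n. revert A Heqn.
  induction n as [n IHn] using lt_wf_ind. intros A Hn.
  apply H; [intros; apply IHp; auto|].
  intros B HB. apply (IHn (rank B)); auto; lia.
Qed.

Section Clauses.
Variables (eta : nat -> W -> V -> Prop) (I : ty -> W -> V -> Prop).
Hypothesis HI : is_interp app R eta I.

Lemma interp_top_variant A p u : wf_at 0 A -> top_variant A = true -> I A p u.
Proof. intros H T. apply (HI A p (wf_at_wf_ty _ H)). rewrite T; auto. Qed.

Lemma interp_var X p u : I (TFV X) p u <-> eta X p u.
Proof. apply (HI (TFV X) p (wf_var X)). Qed.

Lemma interp_lat A p u : wf_at 0 A -> (I (TLat A) p u <-> forall q, R p q -> I A q u).
Proof.
  intro H. rewrite (HI (TLat A) p (wf_at_wf_ty (TLat A) H)).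
  destruct (top_variant (TLat A)) eqn:T; [|reflexivity].
  rewrite top_variant_lat in T. split; auto. intros; apply interp_top_variant; auto.
Qed.

Lemma interp_arr A B p u : wf_at 0 A -> wf_at 0 B -> (I (TArr A B) p u <->
  forall q, clos_refl_trans W R p q -> forall v, I A q v -> I B q (app u v)).
Proof.
  intros H1 H2. rewrite (HI (TArr A B) p (wf_at_wf_ty (TArr A B) (conj H1 H2))).
  destruct (top_variant (TArr A B)) eqn:T; [|reflexivity].
  rewrite top_variant_arr in T. split; auto. intros; apply interp_top_variant; auto.
Qed.

Lemma interp_mu A p u : wf_at 0 (TMu A) -> (I (TMu A) p u <-> I (open A (TMu A)) p u).
Proof.
  intro H. rewrite (HI (TMu A) p (wf_at_wf_ty (TMu A) H)).
  destruct (top_variant (TMu A)) eqn:T; [|reflexivity].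
  split; auto. intros; apply interp_top_variant.
  - apply wf_at_unfold; auto.
  - apply top_variant_unfold; auto.
Qed.

Lemma interp_hereditary : hereditary R eta ->
  forall A, wf_at 0 A -> forall p q, clos_refl_trans W R p q ->
  forall u, I A p u -> I A q u.
Proof.
  intros He A HA p q Hpq.
  enough (step : forall p A, wf_at 0 A -> forall q, R p q -> forall u, I A p u -> I A q u).
  { induction Hpq; eauto. }
  clear A HA p q Hpq.
  apply (world_rank_ind (fun p A => wf_at 0 A ->
    forall q, R p q -> forall u, I A p u -> I A q u)).
  intros p A IHw IHr HA q Hpq u Hu.
  destruct (top_variant A) eqn:T; [apply interp_top_variant; auto|].
  destruct A; simpl in HA.
  - rewrite interp_var in Hu |- *. eapply He; eauto.
  - lia.
  - destruct HA. rewrite interp_arr in Hu |- *; auto. intros s Hs v Hv.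
    apply Hu; auto. apply rt_trans with q; auto using rt_step.
  - rewrite interp_lat in Hu |- *; auto. intros s Hs.
    apply (IHw q A (t_step _ _ _ _ Hpq) HA s Hs). auto.
  - rewrite interp_mu in Hu |- *; auto.
    apply (IHr (open A (TMu A))); auto using rank_unfold, wf_at_unfold.
Qed.

End Clauses.

Section TwoEnvironments.
Variables (eta1 eta2 : nat -> W -> V -> Prop) (I1 I2 : ty -> W -> V -> Prop).
Hypothesis HI1 : is_interp app R eta1 I1.
Hypothesis HI2 : is_interp app R eta2 I2.

Lemma interp_contractive : forall p A X, wf_at 0 A -> proper X A = true ->
  (forall Z q, occurs_free Z A -> clos_refl_trans W R p q ->
     (Z = X -> clos_trans W R p q) -> forall u, eta1 Z q u <-> eta2 Z q u) ->
  forall u, I1 A p u <-> I2 A p u.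
Proof.
  apply (world_rank_ind (fun p A => forall X, wf_at 0 A -> proper X A = true ->
    (forall Z q, occurs_free Z A -> clos_refl_trans W R p q ->
       (Z = X -> clos_trans W R p q) -> forall u, eta1 Z q u <-> eta2 Z q u) ->
    forall u, I1 A p u <-> I2 A p u)).
  intros p A IHw IHr X HA Hp Hag u.
  destruct (top_variant A) eqn:T; [split; intros; eapply interp_top_variant; eauto|].
  (* at strictly later worlds every variable may be treated as guarded *)
  assert (later : forall B q, wf_at 0 B -> (forall Z, occurs_free Z B -> occurs_free Z A) ->
     clos_trans W R p q -> forall w, I1 B q w <-> I2 B q w).
  { intros B q HB HBA Hpq w.
    apply (IHw q B Hpq (fresh B)); auto using proper_not_free, fresh_not_free.
    intros Z s HZ Hqs _.
    pose proof (clos_t_rt_t _ _ _ _ _ Hpq Hqs) as Hps.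
    apply Hag; auto. apply clos_t_clos_rt; auto. }
  destruct A; simpl in HA.
  - simpl in Hp. apply negb_true_iff, Nat.eqb_neq in Hp.
    rewrite (interp_var _ _ HI1), (interp_var _ _ HI2).
    apply Hag; simpl; auto using rt_refl. intro; congruence.
  - lia.
  - destruct HA as [HA1 HA2]. simpl in Hp. rewrite top_variant_arr in T.
    rewrite T, orb_false_r in Hp. apply andb_true_iff in Hp. destruct Hp as [Hp1 Hp2].
    rewrite <- top_variant_arr with (A := A1) in T.
    destruct (rank_arr A1 A2 T) as [Hr1 Hr2].
    assert (K : forall B, wf_at 0 B -> proper X B = true -> rank B < rank (TArr A1 A2) ->
      (forall Z, occurs_free Z B -> occurs_free Z (TArr A1 A2)) ->
      forall q, clos_refl_trans W R p q -> forall w, I1 B q w <-> I2 B q w).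
    { intros B HB HpB Hr HBA q Hpq w. destruct (clos_rt_eq_or_t _ _ _ _ Hpq) as [<-|Hpq'].
      - apply (IHr B Hr X); auto.
      - apply later; auto. }
    rewrite (interp_arr _ _ HI1), (interp_arr _ _ HI2); auto.
    split; intros H q Hq v Hv.
    + apply (K A2); simpl; auto. apply H; auto. apply (K A1); simpl; auto.
    + apply (K A2); simpl; auto. apply H; auto. apply (K A1); simpl; auto.
  - rewrite (interp_lat _ _ HI1), (interp_lat _ _ HI2); auto.
    split; intros H q Hq; apply later; auto using t_step.
  - simpl in Hp. rewrite T, orb_false_r in Hp.
    rewrite (interp_mu _ _ HI1), (interp_mu _ _ HI2); auto.
    apply (IHr _ (rank_unfold A HA T) X); auto using wf_at_unfold.
    + apply proper_open; simpl; auto. rewrite Hp; auto.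
    + intros Z q HZ. apply occurs_free_open in HZ. destruct HZ; apply Hag; auto.
Qed.

Lemma interp_agree p A : wf_at 0 A ->
  (forall Z q, occurs_free Z A -> clos_refl_trans W R p q ->
     forall u, eta1 Z q u <-> eta2 Z q u) ->
  forall u, I1 A p u <-> I2 A p u.
Proof.
  intros HA Hag. apply (interp_contractive p A (fresh A));
    auto using proper_not_free, fresh_not_free.
Qed.

End TwoEnvironments.

Definition env_upd (eta : nat -> W -> V -> Prop) (X : nat) (S : W -> V -> Prop) :
  nat -> W -> V -> Prop := fun Z => if Nat.eqb Z X then S else eta Z.

Lemma interp_subst eta I X D : is_interp app R eta I -> wf_at 0 D ->
  is_interp app R (env_upd eta X (I D)) (fun C => I (subst X D C)).
Proof.
  intros HI HD A p HA u. apply wf_ty_wf_at in HA. cbv beta.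
  destruct A as [y|i|A1 A2|A1|A1]; simpl in HA; simpl subst.
  - unfold env_upd. destruct (Nat.eqb y X); [reflexivity|]. apply (interp_var _ _ HI).
  - lia.
  - destruct HA as [HA1 HA2].
    rewrite (interp_arr _ _ HI); try apply wf_at_subst; auto.
    destruct (top_variant (TArr A1 A2)) eqn:T; [|reflexivity].
    split; auto. intros _ q _ w _. apply (interp_top_variant _ _ HI).
    + apply wf_at_subst; auto.
    + apply top_variant_subst. auto.
  - rewrite (interp_lat _ _ HI); try apply wf_at_subst; auto.
    destruct (top_variant (TLat A1)) eqn:T; [|reflexivity].
    rewrite top_variant_lat in T.
    split; auto. intros _ q _. apply (interp_top_variant _ _ HI).
    + apply wf_at_subst; auto.
    + apply top_variant_subst. auto.
  - assert (HM : wf_at 0 (TMu (subst X D A1))) by (apply (wf_at_subst (TMu A1)); auto).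
    rewrite (interp_mu _ _ HI); auto.
    destruct (top_variant (TMu A1)) eqn:T.
    + split; auto. intros _. apply (interp_top_variant _ _ HI); auto using wf_at_unfold.
      apply top_variant_unfold, (top_variant_subst (TMu A1)). auto.
    + unfold open. rewrite subst_open_rec; auto. reflexivity.
Qed.

Section Existence.
Variable eta : nat -> W -> V -> Prop.

(* The interpretation is built by well-founded recursion on worlds; at a
   fixed world [p], given the interpretation [later] at all strictly later
   worlds, recursion on the rank (with fuel [n]) defines it at [p].  In the
   arrow clause a world [q] with [p ⊵ q] is either [p] itself or strictly
   later, and both readings are conjoined. *)
Section AtWorld.
Variable p : W.
Variable later : forall q, clos_trans W R p q -> ty -> V -> Prop.

Fixpoint interp_at (n : nat) (A : ty) {struct n} : V -> Prop :=
  match n with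
  | 0 => fun _ => False
  | S n' => fun u =>
    if top_variant A then True else
    match A with
    | TFV X => eta X p u
    | TBV _ => False
    | TLat A1 => forall q, R p q -> forall h : clos_trans W R p q, later q h A1 u
    | TArr A1 A2 => forall q, clos_refl_trans W R p q -> forall v,
        ((q = p -> interp_at n' A1 v) /\ (forall h, later q h A1 v)) ->
        ((q = p -> interp_at n' A2 (app u v)) /\ (forall h, later q h A2 (app u v)))
    | TMu A1 => interp_at n' (open A1 (TMu A1)) u
    end
  end.

Lemma interp_at_fuel : forall n m A, wf_at 0 A -> rank A < n -> rank A < m ->
  forall u, interp_at n A u <-> interp_at m A u.
Proof.
  induction n; intros m A HA Hn Hm u; [lia|]. destruct m; [lia|].
  simpl. destruct (top_variant A) eqn:T; [tauto|].
  destruct A; simpl in HA; try reflexivity.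
  - destruct HA as [HA1 HA2]. destruct (rank_arr A1 A2 T) as [R1 R2].
    assert (E1 : forall v, interp_at n A1 v <-> interp_at m A1 v) by (intro; apply IHn; auto; lia).
    assert (E2 : forall v, interp_at n A2 v <-> interp_at m A2 v) by (intro; apply IHn; auto; lia).
    setoid_rewrite E1. setoid_rewrite E2. reflexivity.
  - pose proof (rank_unfold A HA T). apply IHn; auto using wf_at_unfold; lia.
Qed.
End AtWorld.

Definition interp_step (p : W) (later : forall q, clos_trans W R p q -> ty -> V -> Prop) :
  ty -> V -> Prop := fun A => interp_at p later (S (rank A)) A.

Definition interp_fix : W -> ty -> V -> Prop :=
  Fix future_wf (fun _ => ty -> V -> Prop) interp_step.

Lemma interp_fix_eq p : interp_fix p = interp_step p (fun q _ => interp_fix q).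
Proof.
  apply (Fix_eq future_wf (fun _ => ty -> V -> Prop) interp_step).
  intros x f g Hfg. f_equal.
  apply functional_extensionality_dep; intro y. apply functional_extensionality_dep; auto.
Qed.

Lemma interp_fix_at A p u :
  interp_fix p A u <-> interp_at p (fun q _ => interp_fix q) (S (rank A)) A u.
Proof. rewrite interp_fix_eq. reflexivity. Qed.

Lemma interp_fix_is_interp : is_interp app R eta (fun A p => interp_fix p A).
Proof.
  intros A p HA u. apply wf_ty_wf_at in HA. rewrite interp_fix_at. simpl.
  destruct (top_variant A) eqn:T; [reflexivity|].
  destruct A; simpl in HA; try reflexivity.
  - destruct HA as [HA1 HA2]. destruct (rank_arr A1 A2 T) as [R1 R2].
    assert (K : forall B q w, wf_at 0 B -> rank B < rank (TArr A1 A2) ->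
       clos_refl_trans W R p q ->
       ((q = p -> interp_at p (fun q _ => interp_fix q) (rank (TArr A1 A2)) B w) /\
        (forall h : clos_trans W R p q, interp_fix q B w)) <-> interp_fix q B w).
    { intros B q w HB Hr Hq. destruct (clos_rt_eq_or_t _ _ _ _ Hq) as [<-|Hq'].
      - assert (E : interp_at p (fun q _ => interp_fix q) (rank (TArr A1 A2)) B w <->
                    interp_fix p B w).
        { rewrite interp_fix_at. apply interp_at_fuel; auto; lia. }
        rewrite E. split; [tauto|]. split; auto.
      - split; [intros [_ H]; auto|].
        split; auto. intros ->. contradict Hq'. apply clos_t_irrefl. }
    split; intros H q Hq v Hv.
    + apply (proj1 (K A2 q _ HA2 R2 Hq)), H, (proj2 (K A1 q _ HA1 R1 Hq)); auto.
    + apply (proj2 (K A2 q _ HA2 R2 Hq)), H, (proj1 (K A1 q _ HA1 R1 Hq)); auto.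
  - split; [intros H q Hq; apply (H q Hq (t_step _ _ _ _ Hq)) | intros H q Hq h; auto].
  - rewrite interp_fix_at. apply interp_at_fuel; auto using wf_at_unfold.
    pose proof (rank_unfold A HA T). lia.
Qed.

End Existence.

Lemma interp_exists eta : exists I, is_interp app R eta I.
Proof. eexists. apply (interp_fix_is_interp eta). Qed.


(** * Soundness *)

Section Soundness.
Hypothesis local_lin : locally_linear W R.

Section Environment.
Variables (eta : nat -> W -> V -> Prop) (I : ty -> W -> V -> Prop).
Hypothesis HI : is_interp app R eta I.

(* From right to left, local linearity gives, below a world [q'] with
   [p ▷+ q'], a world [r] with [p ⊵ r ▷ q'] all of whose successors lie
   above [q'], so that [•A] holds at [r] by heredity. *)
Lemma interp_lat_arr : hereditary R eta -> forall A B p u, wf_at 0 A -> wf_at 0 B ->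
  I (TLat (TArr A B)) p u <-> I (TArr (TLat A) (TLat B)) p u.
Proof.
  intros He A B p u HA HB.
  assert (lat : forall C q w, wf_at 0 C -> I (TLat C) q w <-> forall s, R q s -> I C s w)
    by (intros; apply (interp_lat _ _ HI); auto).
  rewrite lat by (simpl; auto). rewrite (interp_arr _ _ HI) by (simpl; auto).
  setoid_rewrite (interp_arr _ _ HI); auto. split.
  - intros K r Hpr v Hv. apply lat; auto. intros s Hrs.
    assert (Hps : clos_trans W R p s) by (apply clos_rt_t with r; auto using t_step).
    destruct (clos_t_first _ _ _ _ Hps) as [q [Hpq Hqs]].
    apply (K q Hpq s Hqs). rewrite lat in Hv; auto.
  - intros K q Hpq q' Hqq' v Hv.
    assert (Hpq' : clos_trans W R p q') by (apply clos_t_rt_t with q; auto using t_step).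
    destruct (clos_t_last _ _ _ _ Hpq') as [x [Hpx Hxq']].
    destruct (local_lin _ _ Hxq') as [r [Hxr [Hrq' Hr]]].
    assert (Hpr : clos_refl_trans W R p r) by (apply rt_trans with x; auto).
    specialize (K r Hpr v). rewrite !lat in K; auto.
    apply K; auto. intros s Hs. apply (interp_hereditary _ _ HI He A HA q'); auto.
Qed.

(* Unique fixed points: by induction on worlds, [A] and [mu x.C] agree at all
   strictly later worlds, which is all that [C] consults about [x]. *)
Lemma interp_mu_unique A C x : wf_at 0 A -> wf_at 0 C -> proper x C = true ->
  (forall p u, I A p u <-> I (subst x A C) p u) ->
  forall p u, I A p u <-> I (TMu (close x C)) p u.
Proof.
  intros HA HC Hp Hfix p.
  assert (HM : wf_at 0 (TMu (close x C))).
  { apply wf_ty_wf_at. constructor; auto. apply wf_at_wf_ty; auto. }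
  induction p as [p IHp] using (well_founded_induction future_wf). intro u.
  rewrite Hfix, (interp_mu _ _ HI); auto. unfold open. rewrite open_close_rec; auto.
  apply (interp_contractive _ _ _ _ (interp_subst _ _ x A HI HA)
           (interp_subst _ _ x _ HI HM) p C x); auto.
  intros Z q _ _ HZ w. unfold env_upd. destruct (Nat.eqb_spec Z x) as [->|]; auto.
  reflexivity.
Qed.

Lemma tsim_sound : hereditary R eta -> forall d A B, teq_gen d A B ->
  forall p u, I A p u <-> I B p u.
Proof.
  intros He d A B H. induction H; intros p u.
  - reflexivity.
  - symmetry; auto.
  - rewrite IHteq_gen1; auto.
  - destruct (teq_wf_at _ _ _ H). rewrite !(interp_lat _ _ HI); auto.
    split; intros K q Hq; apply IHteq_gen; auto.
  - destruct (teq_wf_at _ _ _ H), (teq_wf_at _ _ _ H0).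
    rewrite !(interp_arr _ _ HI); auto.
    split; intros K q Hq v Hv; apply IHteq_gen2, K, IHteq_gen1; auto.
  - apply wf_ty_wf_at in H.
    split; intros _; apply (interp_top_variant _ _ HI); simpl; auto using wf_at_top.
  - apply wf_ty_wf_at in H. apply (interp_mu _ _ HI); auto.
  - apply interp_mu_unique; auto using wf_ty_wf_at.
  - apply interp_lat_arr; auto using wf_ty_wf_at.
Qed.

End Environment.

Definition env_respects (eta : nat -> W -> V -> Prop) (g : assum) : Prop :=
  forall X Y, In (X, Y) g -> forall p v, eta X p v -> eta Y p v.

Definition sub_sound (g : assum) (A B : ty) : Prop :=
  forall eta, hereditary R eta -> forall I, is_interp app R eta I ->
  env_respects eta g -> forall p v, I A p v -> I B p v.

Lemma env_respects_union eta g g1 g2 : is_union g g1 g2 -> env_respects eta g ->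
  env_respects eta g1 /\ env_respects eta g2.
Proof. intros Hu Hg. split; intros X Y HXY; apply Hg, Hu; auto. Qed.

Lemma env_upd_hereditary eta X (S : W -> V -> Prop) : hereditary R eta ->
  (forall p q, R p q -> forall v, S p v -> S q v) -> hereditary R (env_upd eta X S).
Proof. intros He HS Z p q Hpq v. unfold env_upd. destruct (Nat.eqb Z X); eauto. Qed.

Lemma env_upd_other eta X S Z : Z <> X -> env_upd eta X S Z = eta Z.
Proof. intro H. unfold env_upd. apply Nat.eqb_neq in H. rewrite H. reflexivity. Qed.

Lemma env_upd_same eta X S : env_upd eta X S X = S.
Proof. unfold env_upd. rewrite Nat.eqb_refl. reflexivity. Qed.

(* Interpret [X] as [I(mu X.A) ∩ I(mu Y.B)] and [Y] as [I(mu Y.B)]; this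
   environment validates the extended assumption [X ≼ Y].  By induction on
   worlds, [I(mu X.A)] is contained in [I(mu Y.B)] at strictly later worlds,
   so by contractivity it agrees there with the new meaning of [X]. *)
Lemma sub_mu_sound g g' X Y A B : sub_sound g' A B -> wf_at 0 A -> wf_at 0 B ->
  (forall a, In a g' <-> In a g \/ a = (X, Y)) -> X <> Y ->
  ~ ftv g X -> ~ occurs_free X B -> ~ ftv g Y -> ~ occurs_free Y A ->
  proper X A = true -> proper Y B = true ->
  sub_sound g (TMu (close X A)) (TMu (close Y B)).
Proof.
  intros IH HA HB Hg' HXY HgX HXB HgY HYA HpA HpB eta He I HI Hg p0.
  set (MA := TMu (close X A)). set (MB := TMu (close Y B)).
  assert (HMA : wf_at 0 MA) by (apply wf_ty_wf_at; constructor; auto using wf_at_wf_ty).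
  assert (HMB : wf_at 0 MB) by (apply wf_ty_wf_at; constructor; auto using wf_at_wf_ty).
  induction p0 as [p IHp] using (well_founded_induction future_wf). intros v Hv.
  set (eta' := env_upd (env_upd eta Y (I MB)) X (fun q w => I MA q w /\ I MB q w)).
  destruct (interp_exists eta') as [I' HI'].
  assert (He' : hereditary R eta').
  { apply env_upd_hereditary; [apply env_upd_hereditary; auto|];
      intros; [|split]; eapply interp_hereditary; eauto using rt_step; tauto. }
  assert (Hg'' : env_respects eta' g').
  { intros Z Z' HZ q w. apply Hg' in HZ. destruct HZ as [HZ|HZ].
    - assert (Z <> X /\ Z <> Y /\ Z' <> X /\ Z' <> Y) as [n1 [n2 [n3 n4]]].
      { repeat split; intro E; subst;
          [apply HgX|apply HgY|apply HgX|apply HgY]; eexists; split; eauto; simpl; auto. }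
      unfold eta'. rewrite !env_upd_other; auto. apply Hg; auto.
    - injection HZ as -> ->. unfold eta'.
      rewrite env_upd_same, env_upd_other, env_upd_same; auto; tauto. }
  apply (interp_mu _ _ HI) in Hv; auto. unfold open in Hv. rewrite open_close_rec in Hv; auto.
  apply (interp_mu _ _ HI); auto. unfold open. rewrite open_close_rec; auto.
  assert (HA' : I' A p v).
  { refine (proj1 (interp_contractive _ _ _ _ (interp_subst _ _ X MA HI HMA) HI' p A X
                     HA HpA _ v) Hv).
    intros Z q HZ _ HZX w. unfold eta'. destruct (Nat.eq_dec Z X) as [->|HZX'].
    - rewrite !env_upd_same. split; [|tauto].
      intro K; split; [exact K | apply IHp; auto].
    - assert (Z <> Y) by (intros ->; auto). rewrite !env_upd_other; auto. reflexivity. }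
  refine (proj1 (interp_agree _ _ _ _ HI' (interp_subst _ _ Y MB HI HMB) p B HB _ v)
            (IH eta' He' I' HI' Hg'' p v HA')).
  intros Z q HZ _ w. unfold eta'. assert (Z <> X) by (intros ->; auto).
  rewrite env_upd_other; auto. unfold env_upd. destruct (Nat.eqb Z Y); reflexivity.
Qed.

Lemma sub_soundness g A B : sub g A B -> sub_sound g A B.
Proof.
  induction 1; intros eta He I HI Hg p v Hv.
  - rewrite (interp_var _ _ HI) in Hv |- *. eauto.
  - apply (interp_top_variant _ _ HI); auto using wf_at_top.
  - apply (tsim_sound _ _ HI He _ _ _ H0); auto.
  - destruct (env_respects_union _ _ _ _ H2 Hg).
    apply (IHsub2 eta He I HI), (IHsub1 eta He I HI); auto.
  - destruct (sub_wf_at _ _ _ H).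
    rewrite (interp_lat _ _ HI) in Hv |- *; auto. intros q Hq. eapply IHsub; eauto.
  - destruct (sub_wf_at _ _ _ H), (sub_wf_at _ _ _ H0), (env_respects_union _ _ _ _ H2 Hg).
    rewrite (interp_arr _ _ HI) in Hv |- *; auto. intros q Hq w Hw.
    eapply (IHsub2 eta He I HI), Hv, (IHsub1 eta He I HI); eauto.
  - destruct (sub_wf_at _ _ _ H).
    assert (X <> Y) by (apply (proj1 H0 (X, Y)), H1; auto).
    eapply sub_mu_sound; eauto.
  - apply wf_ty_wf_at in H0. apply (interp_lat _ _ HI); auto. intros q Hq.
    apply (interp_hereditary _ _ HI He A H0 p); auto using rt_step.
Qed.

End Soundness.

End Interpretation.

Theorem theorem5 :
  forall (V : Type) (app : V -> V -> V) (den : lterm -> (nat -> V) -> V),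
  syn_lambda_algebra V app den ->
  forall (W : Type) (R : W -> W -> Prop),
  lambdaA_frame W R ->
  forall (eta : nat -> W -> V -> Prop),
  hereditary R eta ->
  forall (I : ty -> W -> V -> Prop),
  is_interp app R eta I ->
  forall (g : assum) (A B : ty),
  sub g A B ->
  (forall X Y, In (X, Y) g -> forall p v, eta X p v -> eta Y p v) ->
  forall p v, I A p v -> I B p v.
Proof.
  intros V app den _ W R [Hframe local_lin] eta He I HI g A B Hsub Hg.
  exact (sub_soundness V app W R (frame_future_wf W R Hframe) local_lin g A B Hsub
           eta He I HI Hg).
Qed.
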